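(* Let $n\geq 3$, $d\geq 2$ and $T\geq 1$ be integers, and let $\Phi_T:\mathbb{R}^{d\times n}\to\mathbb{R}^m$ be a 1-WL geometric model (as defined in the context) in which all the functions $\phi_t,\psi_t$ and $\mathrm{ReadOut}$ are upper Lipschitz. Then $\Phi_T$ is not lower Lipschitz with respect to $d_{\mathcal{G}_{\pm}}$; that is, there is no $c>0$ such that $c\, d_{\mathcal{G}_{\pm}}({X},{Y})\leq\|\Phi_T({X})-\Phi_T({Y})\|_2$ for all ${X},{Y}\in\mathbb{R}^{d\times n}$.
   Context: A point set is ${X}\in\mathbb{R}^{d\times n}$ with columns $x_1,\dots,x_n\in\mathbb{R}^d$. A 1-WL geometric model with $T$ iterations is defined as follows: set $c_i^0=0$ for all $i\in[n]$, and for $t=0,\dots,T-1$, $$c_i^{t+1}=\phi_t\Big(c_i^t,\ \psi_t\big(\{\!\{(c_i^t,c_j^t,\|x_i-x_j\|_2)\mid j\in[n]\}\!\}\big)\Big),$$ and finally $\Phi_T({X})=\mathrm{ReadOut}(\{\!\{c_1^T,\dots,c_n^T\}\!\})$. Here $\phi_t$ are functions between Euclidean spaces, and $\psi_t$, $\mathrm{ReadOut}$ are multiset functions, i.e. functions of a matrix whose columns are the multiset elements, invariant to permuting these columns; Lipschitzness of a multiset function means Lipschitzness of this matrix function in the Euclidean sense. The Procrustes Matching metric is $$d_{\mathcal{G}_{\pm}}({X},{Y})=\Big[\min_{(\pi,R,t)\in S_n\times O(d)\times\mathbb{R}^d}\sum_{j=1}^n\|x_j-Ry_{\pi(j)}+t\|_2^2\Big]^{1/2}.$$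 *)

From HB Require Import structures.
From mathcomp Require Import all_boot all_order all_algebra perm.
From mathcomp Require Import classical_sets reals.
Set Implicit Arguments. Unset Strict Implicit. Unset Printing Implicit Defensive.
Import Order.TTheory GRing.Theory Num.Theory.
Local Open Scope ring_scope.

Definition fnorm (R : realType) (p q : nat) (A : 'M[R]_(p, q)) : R :=
  Num.sqrt (\sum_(i < p) \sum_(j < q) A i j ^+ 2).

Definition upper_lipschitz (R : realType) (p q r s : nat)
    (f : 'M[R]_(p, q) -> 'M[R]_(r, s)) : Prop :=
  exists L : R, forall x y, fnorm (f x - f y) <= L * fnorm (x - y).

(* Multiset function: function of a matrix whose columns are the multiset
   elements, invariant under permuting the columns. *)
Definition multiset_fun (R : realType) (p n r s : nat)
    (f : 'M[R]_(p, n) -> 'M[R]_(r, s)) : Prop :=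
  forall (sg : 'S_n) (M : 'M[R]_(p, n)), f (col_perm sg M) = f M.

Definition wl_msgs (R : realType) (d n k : nat) (X : 'M[R]_(d, n))
    (C : 'M[R]_(k, n)) (i : 'I_n) : 'M[R]_(k + k + 1, n) :=
  \matrix_(r, j) (col_mx (col_mx (col i C) (col j C))
                         ((fnorm (col i X - col j X))%:M : 'M[R]_(1, 1))) r ord0.

(* Colours c^t, stored as the matrix whose i-th column is c_i^t. *)
Fixpoint wl_colors (R : realType) (d n : nat) (ks es : nat -> nat)
    (phi : forall t, 'cV[R]_(ks t + es t) -> 'cV[R]_(ks t.+1))
    (psi : forall t, 'M[R]_(ks t + ks t + 1, n) -> 'cV[R]_(es t))
    (X : 'M[R]_(d, n)) (t : nat) : 'M[R]_(ks t, n) :=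
  match t with
  | 0 => 0
  | t'.+1 =>
      let C := wl_colors phi psi X t' in
      \matrix_(r, i) (phi t' (col_mx (col i C) (psi t' (wl_msgs X C i)))) r ord0
  end.

Definition wl_model (R : realType) (d n m T : nat) (ks es : nat -> nat)
    (phi : forall t, 'cV[R]_(ks t + es t) -> 'cV[R]_(ks t.+1))
    (psi : forall t, 'M[R]_(ks t + ks t + 1, n) -> 'cV[R]_(es t))
    (readout : 'M[R]_(ks T, n) -> 'cV[R]_m)
    (X : 'M[R]_(d, n)) : 'cV[R]_m :=
  readout (wl_colors phi psi X T).

(* Procrustes matching metric (the min is written as an infimum). *)
Definition procrustes_dist (R : realType) (d n : nat)
    (X Y : 'M[R]_(d, n)) : R :=
  Num.sqrt (inf [set v : R | exists (sg : 'S_n) (Q : 'M[R]_d) (tv : 'cV[R]_d),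
     Q^T *m Q = 1%:M /\
     v = \sum_(j < n) fnorm (col j X - Q *m col (sg j) Y + tv) ^+ 2]%classic).

From HB Require Import structures.
From mathcomp Require Import all_boot all_order all_algebra perm.
From mathcomp Require Import classical_sets reals.
From mathcomp Require Import ring lra.
Import Order.TTheory GRing.Theory Num.Theory.
Local Open Scope ring_scope.

(* Since all phi_t, psi_t and ReadOut are upper Lipschitz, every colour, and
   hence Phi_T, is a Lipschitz function of the pairwise distances
   ||x_i - x_j||.  Bend the collinear configuration -1, 0, 1, ..., 1 on the
   first axis by lifting its middle point to height e: the pairwise distances
   move only by sqrt(1 + e^2) - 1 <= e^2, so Phi_T moves by O(e^2), while
   the Procrustes distance between the two configurations is at least e/2,
   because no rigid motion can flatten the three points -1, (0, e), 1 back
   onto a line.  Letting e -> 0 rules out any lower Lipschitz constant. *)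

Set Implicit Arguments. Unset Strict Implicit.

Section MatrixFacts.
Context {R : realType}.

Definition entry_bounded p q (M : 'M[R]_(p, q)) (b : R) := forall i j, `|M i j| <= b.

Lemma fnorm_ge0 p q (M : 'M[R]_(p, q)) : 0 <= fnorm M.
Proof. exact: sqrtr_ge0. Qed.

Lemma sqr_fnorm p q (M : 'M[R]_(p, q)) :
  fnorm M ^+ 2 = \sum_(i < p) \sum_(j < q) M i j ^+ 2.
Proof.
by rewrite sqr_sqrtr // sumr_ge0 // => i _; rewrite sumr_ge0 // => j _; rewrite sqr_ge0.
Qed.

Lemma entry_le_fnorm p q (M : 'M[R]_(p, q)) i j : `|M i j| <= fnorm M.
Proof.
rewrite -ler_sqr ?nnegrE ?fnorm_ge0 // sqr_fnorm real_normK ?num_real //.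
rewrite (bigD1 i) //= (bigD1 j) //= -addrA lerDl.
by rewrite addr_ge0 ?sumr_ge0 // => *; rewrite ?sumr_ge0 // => *; rewrite sqr_ge0.
Qed.

Lemma fnorm_le_entry_bound p q (M : 'M[R]_(p, q)) b :
  0 <= b -> entry_bounded M b -> fnorm M <= (p * q)%:R * b.
Proof.
move=> b0 hM; rewrite -ler_sqr ?nnegrE ?fnorm_ge0 ?mulr_ge0 // sqr_fnorm.
apply: (@le_trans _ _ (\sum_(i < p) \sum_(j < q) b ^+ 2)).
  apply: ler_sum => i _; apply: ler_sum => j _.
  by rewrite -real_normK ?num_real // lerXn2r ?nnegrE.
rewrite !sumr_const !card_ord -mulrnA -[X in X <= _]mulr_natl mulnC exprMn.
rewrite ler_wpM2r ?sqr_ge0 //.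
by rewrite -natrX ler_nat; case: (p * q)%N => // k; rewrite expnS leq_pmulr.
Qed.

Lemma entry_bounded_le p q (M : 'M[R]_(p, q)) b b' :
  entry_bounded M b -> b <= b' -> entry_bounded M b'.
Proof. by move=> hM hb i j; apply: le_trans (hM i j) hb. Qed.

Lemma entry_bounded_col_mx p1 p2 q (A : 'M[R]_(p1, q)) (B : 'M[R]_(p2, q)) b :
  entry_bounded A b -> entry_bounded B b -> entry_bounded (col_mx A B) b.
Proof.
by move=> hA hB i j; rewrite -[i]splitK; case: (split i) => k; rewrite ?col_mxEu ?col_mxEd.
Qed.

Lemma entry_bounded_colB p q (A B : 'M[R]_(p, q)) j b :
  entry_bounded (A - B) b -> entry_bounded (col j A - col j B) b.
Proof. by move=> hAB i k; have := hAB i j; rewrite !mxE. Qed.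

Lemma upper_lipschitz_entry_bounded p q r s (f : 'M[R]_(p, q) -> 'M[R]_(r, s)) :
  upper_lipschitz f -> exists K, 0 <= K /\
    forall x y b, 0 <= b -> entry_bounded (x - y) b -> entry_bounded (f x - f y) (K * b).
Proof.
case=> L hL; exists (`|L| * (p * q)%:R); split=> [|x y b b0 hxy i j]; first exact: mulr_ge0.
apply: le_trans (entry_le_fnorm _ i j) _; apply: le_trans (hL x y) _.
apply: le_trans (_ : `|L| * fnorm (x - y) <= _).
  by rewrite ler_wpM2r ?fnorm_ge0 ?ler_norm.
by rewrite -mulrA ler_wpM2l ?fnorm_le_entry_bound.
Qed.

Lemma sum_sqr_lift_le_fnorm p (v : 'cV[R]_p.+1) :
  \sum_(k < p) v (lift ord0 k) ord0 ^+ 2 <= fnorm v ^+ 2.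
Proof.
rewrite sqr_fnorm big_ord_recl big_ord1.
by under [X in _ <= _ + X]eq_bigr do rewrite big_ord1; rewrite lerDr sqr_ge0.
Qed.

Lemma orthogonal_sum_sqr_col p (Q : 'M[R]_p) c : Q^T *m Q = 1%:M ->
  \sum_r Q r c ^+ 2 = 1.
Proof.
move=> hQ; transitivity ((Q^T *m Q) c c); last by rewrite hQ mxE eqxx.
by rewrite mxE; apply: eq_bigr => r _; rewrite mxE expr2.
Qed.

Lemma orthogonal_sum_sqr_row p (Q : 'M[R]_p) r : Q^T *m Q = 1%:M ->
  \sum_c Q r c ^+ 2 = 1.
Proof.
move=> hQ; transitivity ((Q *m Q^T) r r); last by rewrite (mulmx1C hQ) mxE eqxx.
by rewrite mxE; apply: eq_bigr => c _; rewrite mxE expr2.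
Qed.

(* The first two columns of Q are unit vectors while row 0 carries at most 1 of their mass. *)
Lemma orthogonal_lower_mass p (Q : 'M[R]_p.+2) : Q^T *m Q = 1%:M ->
  1 <= \sum_(k < p.+1) (Q (lift ord0 k) ord0 ^+ 2 + Q (lift ord0 k) (lift ord0 ord0) ^+ 2).
Proof.
move=> hQ; rewrite big_split /=.
have := orthogonal_sum_sqr_col ord0 hQ; have := orthogonal_sum_sqr_col (lift ord0 ord0) hQ.
have := orthogonal_sum_sqr_row ord0 hQ; rewrite !big_ord_recl.
have : 0 <= \sum_(i < p) Q ord0 (lift ord0 (lift ord0 i)) ^+ 2.
  by rewrite sumr_ge0 // => i _; rewrite sqr_ge0.
lra.
Qed.

End MatrixFacts.

Unset Implicit Arguments.

Section WLStability.
Context {R : realType} {d n : nat} {ks es : nat -> nat}.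
Context {phi : forall t, 'cV[R]_(ks t + es t) -> 'cV[R]_(ks t.+1)}.
Context {psi : forall t, 'M[R]_(ks t + ks t + 1, n) -> 'cV[R]_(es t)}.
Hypothesis phi_lip : forall t, upper_lipschitz (phi t).
Hypothesis psi_lip : forall t, upper_lipschitz (psi t).

Definition pairwise_dists_close (X Y : 'M[R]_(d, n)) (b : R) :=
  forall i j, `|fnorm (col i X - col j X) - fnorm (col i Y - col j Y)| <= b.

Lemma wl_msgs_close (X Y : 'M[R]_(d, n)) k (CX CY : 'M[R]_(k, n)) i b :
  entry_bounded (CX - CY) b -> pairwise_dists_close X Y b ->
  entry_bounded (wl_msgs X CX i - wl_msgs Y CY i) b.
Proof.
move=> hC hXY a j; rewrite !mxE; case: (split a) => [a'|a'].
  rewrite !mxE; case: (split a') => a''; rewrite !mxE;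
    [have := hC a'' i | have := hC a'' j]; by rewrite !mxE.
by rewrite ord1 !mxE /= !mulr1n.
Qed.

Lemma wl_colors_close t : exists K, 0 <= K /\
  forall (X Y : 'M[R]_(d, n)) e, 0 <= e -> pairwise_dists_close X Y e ->
    entry_bounded (wl_colors phi psi X t - wl_colors phi psi Y t) (K * e).
Proof.
elim: t => [|t [K [K0 IH]]].
  by exists 0; split=> // X Y e _ _ i j; rewrite subrr mxE normr0 mul0r.
have [Kf [Kf0 hphi]] := upper_lipschitz_entry_bounded (phi_lip t).
have [Kp [Kp0 hpsi]] := upper_lipschitz_entry_bounded (psi_lip t).
exists (Kf * ((1 + Kp) * (K + 1))); split; first by rewrite !mulr_ge0 ?addr_ge0.
move=> X Y e e0 hXY r i /=; rewrite !mxE.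
set CX := wl_colors phi psi X t; set CY := wl_colors phi psi Y t.
have B0 : 0 <= (K + 1) * e by rewrite mulr_ge0 ?addr_ge0.
have hC : entry_bounded (CX - CY) ((K + 1) * e).
  by apply: entry_bounded_le (IH X Y e e0 hXY) _; rewrite ler_wpM2r ?lerDl.
have hmsgs : entry_bounded (wl_msgs X CX i - wl_msgs Y CY i) ((K + 1) * e).
  apply: wl_msgs_close => // i' j'; apply: le_trans (hXY i' j') _.
  by rewrite ler_peMl ?lerDr.
have hin : entry_bounded (col_mx (col i CX) (psi t (wl_msgs X CX i)) -
                          col_mx (col i CY) (psi t (wl_msgs Y CY i))) ((1 + Kp) * ((K + 1) * e)).
  rewrite opp_col_mx add_col_mx; apply: entry_bounded_col_mx.
    by apply: entry_bounded_le (entry_bounded_colB i hC) _; rewrite ler_peMl ?lerDl.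
  by apply: entry_bounded_le (hpsi _ _ _ B0 hmsgs) _; rewrite ler_wpM2r ?lerDr.
have B0' : 0 <= (1 + Kp) * ((K + 1) * e) by rewrite mulr_ge0 ?addr_ge0.
by have := hphi _ _ _ B0' hin r ord0; rewrite !mxE !mulrA.
Qed.

Lemma wl_model_close {T m : nat} {readout : 'M[R]_(ks T, n) -> 'cV[R]_m} :
  upper_lipschitz readout -> exists A, 0 <= A /\
  forall (X Y : 'M[R]_(d, n)) e, 0 <= e -> pairwise_dists_close X Y e ->
    fnorm (wl_model phi psi readout X - wl_model phi psi readout Y) <= A * e.
Proof.
move=> readout_lip.
have [K [K0 hcolors]] := wl_colors_close T.
have [Kr [Kr0 hreadout]] := upper_lipschitz_entry_bounded readout_lip.
exists ((m * 1)%:R * (Kr * K)); split=> [|X Y e e0 hXY]; first by rewrite !mulr_ge0.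
rewrite -!mulrA; apply: fnorm_le_entry_bound; first by rewrite !mulr_ge0.
by apply: hreadout; [rewrite mulr_ge0 | exact: hcolors].
Qed.
End WLStability.

Section BentConfiguration.
Context {R : realType}.

Definition line_coord (j : nat) : R := if j == 0%N then -1 else if j == 1%N then 0 else 1.

Definition bump (e : R) (j : nat) : R := if j == 1%N then e else 0.

Definition bent_config {d n : nat} (e : R) : 'M[R]_(d, n) :=
  \matrix_(r, j) if r == 0 :> nat then line_coord j else if r == 1 :> nat then bump e j else 0.

Lemma sqr_line_coord j : j != 1%N -> line_coord j ^+ 2 = 1.
Proof. by rewrite /line_coord => /negbTE ->; case: ifP; rewrite ?sqrrN expr1n. Qed.

Lemma dist_sqrt1_sqrt1D (x : R) : 0 <= x -> `|Num.sqrt 1 - Num.sqrt (1 + x)| <= x.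
Proof.
move=> x0; have s1 : 1 <= Num.sqrt (1 + x) by rewrite -{1}sqrtr1 ler_sqrt ?lerDl ?addr_ge0.
rewrite sqrtr1 distrC ger0_norm ?subr_ge0 // lerBlDl.
by rewrite -{2}[1 + x]sqr_sqrtr ?addr_ge0 // expr2 ler_peMl // (le_trans ler01 s1).
Qed.

Lemma fnorm_col_bent_config {d' n : nat} (e : R) (i j : 'I_n) :
  fnorm (col i (bent_config e) - col j (bent_config e) : 'cV_d'.+2) =
  Num.sqrt ((line_coord i - line_coord j) ^+ 2 + (bump e i - bump e j) ^+ 2).
Proof.
rewrite /fnorm; under eq_bigr do rewrite big_ord1.
rewrite 2!big_ord_recl big1 ?addr0 => [|r _]; last by rewrite !mxE subrr expr0n.
by rewrite !mxE.
Qed.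

Lemma bent_config_dists_close {d' n : nat} (e : R) : 0 <= e ->
  pairwise_dists_close (bent_config (d := d'.+2) (n := n) 0) (bent_config e) (e ^+ 2).
Proof.
move=> e0 i j; rewrite !fnorm_col_bent_config /bump.
case: (eqVneq (i : nat) 1%N) => hi; case: (eqVneq (j : nat) 1%N) => hj;
  rewrite ?subrr ?normr0 ?sqr_ge0 // ?subr0 ?sub0r ?sqrrN expr0n addr0.
- by rewrite {1 2}/line_coord hi sub0r sqrrN sqr_line_coord // dist_sqrt1_sqrt1D ?sqr_ge0.
- by rewrite {2 3}/line_coord hj subr0 sqr_line_coord // dist_sqrt1_sqrt1D ?sqr_ge0.
Qed.

Lemma mulmx_col_bent_config {d' n : nat} (Q : 'M[R]_d'.+2) e (k : 'I_n) r :
  (Q *m col k (bent_config e)) r ord0 =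
  Q r ord0 * line_coord k + Q r (lift ord0 ord0) * bump e k.
Proof.
rewrite mxE 2!big_ord_recl big1 ?addr0 => [|s _]; first by rewrite !mxE.
by rewrite !mxE /= mulr0.
Qed.

(* Minimising over s, the right-hand side is 2 a^2 + 2/3 (b e)^2. *)
Lemma three_point_spread (a b s e : R) : e ^+ 2 <= 1 ->
  2 / 3 * e ^+ 2 * (a ^+ 2 + b ^+ 2) <= (- a - s) ^+ 2 + (b * e - s) ^+ 2 + (a - s) ^+ 2.
Proof.
move=> e1; have := sqr_ge0 a; have := sqr_ge0 (e * b); have := sqr_ge0 (s - e * b / 3).
nra.
Qed.

Lemma bent_config_matching_cost_ge {d' n' : nat} (e : R) (sg : 'S_n'.+3)
    (Q : 'M[R]_d'.+2) (tv : 'cV[R]_d'.+2) :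
  0 <= e <= 1 -> Q^T *m Q = 1%:M ->
  2 / 3 * e ^+ 2 <= \sum_(j < n'.+3)
    fnorm (col j (bent_config 0) - Q *m col (sg j) (bent_config e) + tv) ^+ 2.
Proof.
move=> /andP[e0 e1] hQ.
(* Keep only the rows below the first, where bent_config 0 vanishes, and the points 0, 1, 2. *)
pose res (k : 'I_d'.+1) (j : 'I_n'.+3) := (Q (lift ord0 k) ord0 * line_coord j +
  Q (lift ord0 k) (lift ord0 ord0) * bump e j - tv (lift ord0 k) ord0) ^+ 2.
have cost_ge j : \sum_k res k (sg j) <=
    fnorm (col j (bent_config 0) - Q *m col (sg j) (bent_config e) + tv) ^+ 2.
  apply: le_trans (sum_sqr_lift_le_fnorm _); rewrite le_eqVlt; apply/orP; left.
  apply/eqP/eq_bigr => k _.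
  rewrite /res -mulmx_col_bent_config !mxE /= /bump !if_same.
  by rewrite sub0r addrC -opprB sqrrN.
apply: le_trans (ler_sum _ (fun j _ => cost_ge j)).
have -> : \sum_j \sum_k res k (sg j) = \sum_j \sum_k res k j.
  by symmetry; exact: (reindex_inj (@perm_inj _ sg)).
rewrite 3!big_ord_recl !addrA.
apply: le_trans (_ : _ <= \sum_k (res k 0 + res k 1 + res k 2)) _; last first.
  rewrite !big_split /= lerDl.
  by rewrite sumr_ge0 // => j _; rewrite sumr_ge0 // => k _; exact: sqr_ge0.
apply: le_trans (_ : _ <= \sum_(k < d'.+1) 2 / 3 * e ^+ 2 *
    (Q (lift ord0 k) ord0 ^+ 2 + Q (lift ord0 k) (lift ord0 ord0) ^+ 2)) _.
  rewrite -mulr_sumr ler_peMr ?orthogonal_lower_mass //.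
  by rewrite mulr_ge0 ?sqr_ge0 ?divr_ge0.
apply: ler_sum => k _; rewrite /res /line_coord /bump /= !mulr0 !addr0 mulrN1 mulr1 add0r.
by apply: three_point_spread; rewrite expr_le1.
Qed.

Lemma procrustes_dist_bent_config_ge {d' n' : nat} (e : R) : 0 <= e <= 1 ->
  e / 2 <= procrustes_dist (bent_config (d := d'.+2) (n := n'.+3) 0) (bent_config e).
Proof.
move=> /andP[e0 e1]; rewrite /procrustes_dist.
set S := [set v | _]%classic.
have S_ge : 2 / 3 * e ^+ 2 <= inf S.
  apply: lb_le_inf => [|v [sg [Q [tv [hQ ->]]]]].
    by eexists; exists 1%g, 1%:M, 0; split; first rewrite trmx1 mul1mx.
  by rewrite bent_config_matching_cost_ge ?e0.
rewrite -(ger0_norm (_ : 0 <= e / 2)) ?divr_ge0 // -sqrtr_sqr ler_sqrt; last first.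
  by apply: le_trans S_ge; rewrite mulr_ge0 ?sqr_ge0 ?divr_ge0.
apply: le_trans S_ge; have := sqr_ge0 e; rewrite expr_div_n; set x := e ^+ 2; lra.
Qed.
End BentConfiguration.

Lemma not_lower_lipschitz_of_quadratic_collapse {R : realFieldType} {U : Type}
    {D F : U -> U -> R} {A : R} : 0 <= A ->
  (forall e, 0 < e <= 1 -> exists x y, e / 2 <= D x y /\ F x y <= A * e ^+ 2) ->
  ~ exists c, 0 < c /\ forall x y, c * D x y <= F x y.
Proof.
move=> A0 collapse [c [c0 hc]].
pose e := Num.min 1 (c / (2 * (A + 1))).
have A1 : 0 < 2 * (A + 1) by rewrite mulr_gt0 // ltr_wpDl.
have e0 : 0 < e by rewrite lt_min ltr01 divr_gt0.
have e_small : e * (2 * (A + 1)) <= c by rewrite -ler_pdivlMr // ge_min lexx orbT.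
have e1 : e <= 1 by rewrite ge_min lexx.
have [x [y [hD hF]]] := collapse e (introT andP (conj e0 e1)).
have : c * (e / 2) <= A * e ^+ 2.
  by apply: le_trans (le_trans (hc x y) hF); rewrite ler_pM2l.
nra.
Qed.

Theorem corollary1 (R : realType) (n d T m : nat) (ks es : nat -> nat)
    (phi : forall t, 'cV[R]_(ks t + es t) -> 'cV[R]_(ks t.+1))
    (psi : forall t, 'M[R]_(ks t + ks t + 1, n) -> 'cV[R]_(es t))
    (readout : 'M[R]_(ks T, n) -> 'cV[R]_m) :
  (3 <= n)%N -> (2 <= d)%N -> (1 <= T)%N ->
  (forall t, multiset_fun (psi t)) ->
  multiset_fun readout ->
  (forall t, upper_lipschitz (phi t)) ->
  (forall t, upper_lipschitz (psi t)) ->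
  upper_lipschitz readout ->
  ~ (exists c : R, 0 < c /\
       forall X Y : 'M[R]_(d, n),
         c * procrustes_dist X Y <=
         fnorm (wl_model phi psi readout X - wl_model phi psi readout Y)).
Proof.
move=> n3 d2 _ _ _ phi_lip psi_lip readout_lip.
have [n' En] : exists n', n = n'.+3 by exists (n - 3)%N; rewrite -addn3 subnK.
have [d' Ed] : exists d', d = d'.+2 by exists (d - 2)%N; rewrite -addn2 subnK.
subst n d.
have [A [A0 model_close]] := wl_model_close (d := d'.+2) phi_lip psi_lip readout_lip.
apply: (not_lower_lipschitz_of_quadratic_collapse A0) => e /andP[e0 e1].
exists (bent_config 0), (bent_config e); split.
  by apply: procrustes_dist_bent_config_ge; rewrite ltW.
by apply: model_close; [exact: sqr_ge0 | exact: bent_config_dists_close (ltW e0)].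
Qed.
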